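(* Let $P(z)=\sum_{k=1}^K a_k(1-z)^k$, with $a_k\in\mathbb{C}$, be a polynomial mapping the unit disc $\mathbb{D}$ into $\overline{\mathbb{C}_0}=\{w:\operatorname{Re}w\ge0\}$. Then either $P\equiv0$ or $a_1>0$. *)

From mathcomp Require Import all_boot all_order all_algebra.
From mathcomp Require Import reals complex.
Set Implicit Arguments. Unset Strict Implicit. Unset Printing Implicit Defensive.
Import Order.TTheory GRing.Theory Num.Theory.
Local Open Scope ring_scope.
Local Open Scope complex_scope.

Definition Pfun (R : rcfType) (K : nat) (a : nat -> R[i]) (z : R[i]) : R[i] :=
  \sum_(1 <= k < K.+1) a k * (1 - z) ^+ k.

From mathcomp Require Import all_boot all_order all_algebra.
From mathcomp Require Import reals complex.
From mathcomp Require Import ring lra.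
From mathcomp Require Import trigo.
Set Implicit Arguments.
Unset Strict Implicit.
Unset Printing Implicit Defensive.
Import Order.TTheory GRing.Theory Num.Theory.
Local Open Scope ring_scope.

(* Let m be the least index with a_m <> 0.  For Re u > 0 and small t > 0 the
   point z = 1 - t u lies in the disc and Re P(z) = t^m Re(a_m u^m) + O(t^(m+1)),
   so Re(a_m u^m) >= 0 on the whole right half-plane.  When m >= 2, u^m sweeps
   the directions of angle less than pi in absolute value, which forces a_m = 0;
   when m = 1, the half-plane condition forces a_1 to be real and nonnegative. *)

Section RealInequalities.
Variable R : realFieldType.

Lemma ge0_of_ge0_perturbed (c M d : R) (h : R -> R) : 0 < d ->
  (forall t, 0 < t -> t < d -> 0 <= c + t * h t) ->
  (forall t, 0 < t -> t < d -> `|h t| <= M) -> 0 <= c.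
Proof.
move=> d0 c_th_ge0 h_le; rewrite leNgt; apply/negP => c_lt0.
have d2 : 0 < d / 2 by rewrite divr_gt0.
have d2d : d / 2 < d by lra.
have M_ge0 : 0 <= M by apply: le_trans (h_le _ d2 d2d).
set t := Num.min (d / 2) (- c / (2 * (M + 1))).
have t_gt0 : 0 < t by rewrite lt_min d2 divr_gt0 ?oppr_gt0 //; lra.
have t_lt_d : t < d by apply: le_lt_trans d2d; rewrite ge_min lexx.
have tM_le_c : t * (2 * (M + 1)) <= - c.
  by rewrite -ler_pdivlMr ?ge_min ?lexx ?orbT //; lra.
have := c_th_ge0 t t_gt0 t_lt_d; have /ler_normlW h_leM := h_le t t_gt0 t_lt_d.
have : t * h t <= t * M by rewrite ler_pM2l.
nra.
Qed.

Lemma lowest_coef_ge0 (K m : nat) (c : nat -> R) (d : R) :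
  0 < d -> (0 < m <= K)%N -> (forall k, (0 < k < m)%N -> c k = 0) ->
  (forall t, 0 < t -> t < d -> 0 <= \sum_(1 <= k < K.+1) c k * t ^+ k) ->
  0 <= c m.
Proof.
move=> d0 /andP[m_gt0 mK] c_low sum_ge0.
pose tail t := \sum_(m.+1 <= k < K.+1) c k * t ^+ (k - m.+1).
apply: (@ge0_of_ge0_perturbed (c m) (\sum_(m.+1 <= k < K.+1) `|c k|)
  (Num.min d 1) tail); first by rewrite lt_min d0 ltr01.
- move=> t t_gt0; rewrite lt_min => /andP[td _].
  have sum_split : \sum_(1 <= k < K.+1) c k * t ^+ k =
      t ^+ m * (c m + t * tail t).
    rewrite (@big_cat_nat _ _ _ m) //=; last by rewrite ltnW.
    rewrite big_nat_cond big1 ?add0r; last first.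
      by move=> k /andP[/andP[k_gt0 km] _]; rewrite c_low ?mul0r // k_gt0.
    rewrite big_ltn ?ltnS // mulrDr mulrC; congr (_ + _).
    rewrite mulrA -exprSr mulr_sumr; apply: eq_big_nat => k /andP[mk _].
    by rewrite mulrCA -exprD subnKC.
  by have := sum_ge0 t t_gt0 td; rewrite sum_split pmulr_rge0 // exprn_gt0.
- move=> t t_gt0; rewrite lt_min => /andP[_ t_lt1].
  apply: le_trans (ler_norm_sum _ _ _) _; apply: ler_sum => k _.
  rewrite normrM normrX ler_piMr // exprn_ile1 // ger0_norm ?ltW //.
Qed.

End RealInequalities.

Lemma least_nonzero_index {V : zmodType} (K : nat) (a : nat -> V) :
  (forall k, (0 < k <= K)%N -> a k = 0) \/
  exists m, [/\ (0 < m <= K)%N, a m != 0 & forall k, (0 < k < m)%N -> a k = 0].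
Proof.
have [ex_nz | no_nz] := boolP (has (fun k => a k != 0) (index_iota 1 K.+1));
  last first.
  left => k kK; apply/eqP; apply: contraNT no_nz => ak.
  by apply/hasP; exists k; rewrite // mem_index_iota ltnS.
right; have exP : exists k, (0 < k <= K)%N && (a k != 0).
  by case/hasP: ex_nz => k; rewrite mem_index_iota ltnS => kK ak; exists k; rewrite kK.
case: (ex_minnP exP) => m /andP[mK am] m_min; exists m; split=> // k /andP[k_gt0 km].
have kK : (k <= K)%N by case/andP: mK => _ /(leq_trans (ltnW km)).
by apply/eqP; apply: contraTT km => ak; rewrite -leqNgt; apply: m_min; rewrite k_gt0 kK.
Qed.

Local Open Scope complex_scope.

Local Notation ReC := (@complex.Re _).
Local Notation ImC := (@complex.Im _).

Section ComplexPlane.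
Variable R : realType.
Local Notation pi := (@pi R).

Lemma ReC_sum (I : Type) (r : seq I) (P : pred I) (F : I -> R[i]) :
  ReC (\sum_(i <- r | P i) F i) = \sum_(i <- r | P i) ReC (F i).
Proof. exact: (raddf_sum (@complex.Re R : Rcomplex R -> R)). Qed.

Lemma ReC_realM (t : R) (z : R[i]) : ReC (t%:C * z) = t * ReC z.
Proof. by case: z => p q /=; rewrite mul0r subr0. Qed.

Lemma normc_lt1 (z : R[i]) : ReC z ^+ 2 + ImC z ^+ 2 < 1 -> `|z| < 1.
Proof.
case: z => p q /= h; rewrite normc_def ltcE /= eqxx /=.
by rewrite -sqrtr1 ltr_sqrt // ?ltr01.
Qed.

Definition cis (th : R) : R[i] := cos th +i* sin th.

Lemma cisX th n : cis th ^+ n = cis (n%:R * th).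
Proof.
elim: n => [|n IH]; first by rewrite expr0 mul0r /cis cos0 sin0.
rewrite exprS IH /cis /= -[n.+1]addn1 natrD mulrDl mul1r addrC cosD sinD.
by congr (_ +i* _); ring.
Qed.

Lemma ReC_mul_cis (c : R[i]) th :
  ReC (c * cis th) = ReC c * cos th - ImC c * sin th.
Proof. by case: c. Qed.

Section HalfPlaneCone.
Variables (c : R[i]) (m : nat).
Hypothesis cone : forall u : R[i], 0 < ReC u -> 0 <= ReC (c * u ^+ m).

Lemma ReC_mul_cis_ge0 th : (0 < m)%N ->
  - (m%:R * (pi / 2)) < th < m%:R * (pi / 2) -> 0 <= ReC (c * cis th).
Proof.
move=> m_gt0 th_bound.
have m_pos : 0 < m%:R :> R by rewrite ltr0n.
have Re_cis_gt0 : 0 < ReC (cis (th / m%:R)).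
  by rewrite /= cos_gt0_pihalf // ltr_pdivlMr // ltr_pdivrMr // mulNr mulrC.
by have := cone Re_cis_gt0; rewrite cisX [_%:R * _]mulrC divfK ?gt_eqF.
Qed.

Lemma eq0_of_cone_gt1 : (1 < m)%N -> c = 0.
Proof.
move=> m_gt1; have m_gt0 : (0 < m)%N by apply: ltn_trans m_gt1.
have pi_gt0 : 0 < pi := pi_gt0 R.
have pi_le : pi <= m%:R * (pi / 2).
  have : 2 <= m%:R :> R by rewrite ler_nat.
  nra.
have cone_angle th : - pi < th < pi -> 0 <= ReC (c * cis th).
  by move=> /andP[? ?]; apply: ReC_mul_cis_ge0 => //; apply/andP; split; lra.
have sin_pi4 : 0 < sin (pi / 4) :> R by apply: sin_gt0_pi; apply/andP; split; lra.
have : [/\ - pi < 0 < pi, - pi < pi / 2 < pi, - pi < - (pi / 2) < pi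
         & - pi < pi / 4 + pi / 2 < pi].
  by split; apply/andP; split; lra.
case=> /cone_angle h0 /cone_angle h1 /cone_angle h2 /cone_angle h3.
move: h0 h1 h2 h3; rewrite !ReC_mul_cis cos0 sin0 cosN sinN cos_pihalf sin_pihalf.
rewrite cosDpihalf sinDpihalf; case: c => x y /= h0 h1 h2 h3.
have y0 : y = 0 by lra.
have x0 : x = 0 by move: h3; rewrite y0; nra.
by rewrite x0 y0.
Qed.

Lemma gt0_of_cone1 : m = 1%N -> c != 0 -> 0 < c.
Proof.
move=> m1; subst m; move: cone; case: c => x y cone1 c_neq0.
have x_ge0 : 0 <= x by have := cone1 1 ltr01; rewrite expr1 /=; lra.
have y_le0 : 0 <= - y.
  apply: (@ge0_of_ge0_perturbed _ (- y) `|x| 1 (fun _ => x)) => //.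
  by move=> t t_gt0 _; have := cone1 (t +i* 1) t_gt0; rewrite expr1 /=; lra.
have y_ge0 : 0 <= y.
  apply: (@ge0_of_ge0_perturbed _ y `|x| 1 (fun _ => x)) => //.
  by move=> t t_gt0 _; have := cone1 (t +i* (-1)) t_gt0; rewrite expr1 /=; lra.
have y0 : y = 0 by lra.
subst y; rewrite ltcE /= eqxx /= lt_neqAle x_ge0 andbT.
by apply: contraNneq c_neq0 => <-.
Qed.

End HalfPlaneCone.

Lemma ReC_lowest_term_ge0 (K : nat) (a : nat -> R[i]) m
  (hmap : forall z : R[i], `|z| < 1 -> 0 <= ReC (Pfun K a z))
  (m_range : (0 < m <= K)%N) (a_low : forall k, (0 < k < m)%N -> a k = 0)
  (u : R[i]) (u_right : 0 < ReC u) : 0 <= ReC (a m * u ^+ m).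
Proof.
set D := ReC u ^+ 2 + ImC u ^+ 2 + 1.
have D_gt0 : 0 < D.
  by rewrite /D; have := sqr_ge0 (ReC u); have := sqr_ge0 (ImC u); lra.
apply: (@lowest_coef_ge0 R K m (fun k => ReC (a k * u ^+ k)) (ReC u / D)) => //.
- by rewrite divr_gt0.
- by move=> k /a_low ->; rewrite mul0r.
move=> t t_gt0 t_small.
(* |1 - t u|^2 = 1 - 2 t Re u + t^2 |u|^2, and t D < Re u makes this < 1. *)
have in_disc : `|1 - t%:C * u| < 1.
  apply: normc_lt1; have tD : t * D < ReC u by rewrite -ltr_pdivlMr.
  move: tD u_right; rewrite /D; case: (u) => p q /= tD p_gt0; nra.
move: (hmap _ in_disc); rewrite /Pfun ReC_sum.
by under eq_bigr do rewrite subKr exprMn -rmorphXn mulrCA ReC_realM mulrC.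
Qed.

End ComplexPlane.

Theorem lemma4p3 (R : realType) (K : nat) (a : nat -> R[i])
  (hmap : forall z : R[i], `|z| < 1 -> 0 <= Re (Pfun K a z)) :
  (forall z : R[i], Pfun K a z = 0) \/ 0 < a 1%N.
Proof.
have hmapC : forall z : R[i], `|z| < 1 -> 0 <= ReC (Pfun K a z).
  by move=> z /hmap; rewrite -complexRe ler0c.
have [a_zero | [m [m_range am a_low]]] := least_nonzero_index K a.
  left => z; rewrite /Pfun big_nat_cond big1 // => k /andP[/andP[k1 kK] _].
  by rewrite a_zero ?mul0r // k1.
have cone := ReC_lowest_term_ge0 hmapC m_range a_low.
have [m_gt1 | m_le1] := ltnP 1 m.
  by case/eqP: am; apply: eq0_of_cone_gt1 cone m_gt1.
have m1 : m = 1%N by apply/eqP; rewrite eqn_leq m_le1; case/andP: m_range.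
by right; rewrite -m1; apply: gt0_of_cone1 cone m1 am.
Qed.
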